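(* Let $N$ be a natural number, and let $\mathcal{T}_N$ be the class of all finite digraphs $D$ whose vertex set can be written as a disjoint union $D_e\cup D_c\cup D_f$ such that: (i) the digraph induced on $D_e$ is empty, and is either reflexive or irreflexive; (ii) the digraph induced on $D_c$ is complete and reflexive (every ordered pair $(x,y)$ with $x,y\in D_c$, including $x=y$, is an edge); (iii) $|D_f|\le N$; (iv) the connections between $D_e$ and $D_c$ are uniform: for all $x,y\in D_e$ and all $z,t\in D_c$ we have $(x,z)\in E(D)\Leftrightarrow (y,t)\in E(D)$ and $(z,x)\in E(D)\Leftrightarrow (t,y)\in E(D)$. Then $\mathcal{T}_N$ is well quasi-ordered under both the (standard) homomorphic image ordering and the strong homomorphic image ordering.
   Context: A digraph is a set $D$ with a binary relation $E(D)\subseteq D\times D$ (pairs in $E(D)$ are edges; loops $(x,x)$ are allowed). A digraph is reflexive if all loops $(x,x)$ are edges, irreflexive if none are; it is empty if there is no edge $(x,y)$ with $x\neq y$. A map $\phi:D_1\to D_2$ is a homomorphism if $(x,y)\in E(D_1)$ implies $(\phi(x),\phi(y))\in E(D_2)$; it is strong if moreover $\{(\phi(x),\phi(y)):(x,y)\in E(D_1)\}$ equals $E(D_2)\cap(\phi(D_1)\times\phi(D_1))$. An epimorphism is a surjective homomorphism. The (standard) homomorphic image ordering is: $A\preceq B$ iff there is an epimorphism $B\to A$; the strong homomorphic image ordering: $A\preceq B$ iff there is a strong epimorphism $B\to A$. A class is well quasi-ordered (wqo) if it contains no infinite strictly decreasing sequence and no infinite antichain (set of pairwise incomparable elements); structures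 are considered up to isomorphism. *)

From mathcomp Require Import all_boot.
Set Implicit Arguments. Unset Strict Implicit. Unset Printing Implicit Defensive.

(* A finite digraph, represented (up to isomorphism) on the vertex set 'I_n,
   with edge relation E (loops allowed). *)
Record digraph := Digraph { dsize : nat; dedge : rel 'I_dsize }.

Notation vert D := ('I_(dsize D)).

Definition is_hom (D1 D2 : digraph) (f : vert D1 -> vert D2) : Prop :=
  forall x y, @dedge D1 x y -> @dedge D2 (f x) (f y).

Definition is_strong_hom (D1 D2 : digraph) (f : vert D1 -> vert D2) : Prop :=
  @is_hom D1 D2 f /\
  forall a b, @dedge D2 (f a) (f b) ->
    exists x y, [/\ @dedge D1 x y, f x = f a & f y = f b].

Definition surj (A B : Type) (f : A -> B) : Prop := forall b, exists a, f a = b.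

Definition hom_le (A B : digraph) : Prop :=
  exists f : vert B -> vert A, @is_hom B A f /\ surj f.

Definition strong_hom_le (A B : digraph) : Prop :=
  exists f : vert B -> vert A, @is_strong_hom B A f /\ surj f.

Definition wqo (P : digraph -> Prop) (le : digraph -> digraph -> Prop) : Prop :=
  (~ exists s : nat -> digraph, (forall i, P (s i)) /\
        forall i, le (s i.+1) (s i) /\ ~ le (s i) (s i.+1))
  /\
  (~ exists s : nat -> digraph, (forall i, P (s i)) /\
        forall i j, i <> j -> ~ le (s i) (s j)).

Definition in_TN (N : nat) (D : digraph) : Prop :=
  exists De Dc Df : {set vert D},
    [/\ [disjoint De & Dc], [disjoint De & Df], [disjoint Dc & Df],
        De :|: Dc :|: Df = setT &
    [/\
        (forall x y, x \in De -> y \in De -> x != y -> ~~ @dedge D x y) /\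
        ((forall x, x \in De -> @dedge D x x) \/
         (forall x, x \in De -> ~~ @dedge D x x)),
        (forall x y, x \in Dc -> y \in Dc -> @dedge D x y),
        #|Df| <= N &
        (forall x y z t, x \in De -> y \in De -> z \in Dc -> t \in Dc ->
           (@dedge D x z = @dedge D y t) /\ (@dedge D z x = @dedge D t y))]].

From mathcomp Require Import all_boot.
From Stdlib Require Import Classical ClassicalEpsilon.
Set Implicit Arguments. Unset Strict Implicit. Unset Printing Implicit Defensive.

(* Descending chains: an epimorphism B ->> A cannot increase the number of
   vertices, and when it preserves it, it is a bijection that cannot decrease
   the number of edges; if the number of edges is also preserved it is an
   isomorphism, whose inverse is a strong epimorphism A ->> B.  So along a
   strictly descending chain (#vertices, -#edges) decreases lexicographically.

   Antichains: colour each vertex of a digraph in T_N by its part (D_e, D_c, or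
   its index in D_f), its loop, and its adjacencies to D_c and to each vertex of
   D_f.  There are finitely many colours and they determine the digraph.  If D'
   has at least as many vertices of each colour as D, and the same colours
   occur, then sending each colour class of D' onto the class of D is a strong
   epimorphism.  By Dickson's lemma, i.e. closure of almost-full relations under
   finite intersection, any sequence of colour-count vectors contains such a
   pair. *)

Definition almost_full (X : Type) (r : rel X) : Prop :=
  forall s : nat -> X, exists i j, i < j /\ r (s i) (s j).

Lemma increasing_chain (Q : nat -> nat -> Prop) (n0 : nat) :
  (forall n, n0 <= n -> exists2 m, n < m & Q n m) ->
  exists t : nat -> nat, {homo t : i j / i < j} /\ forall k, Q (t k) (t k.+1).
Proof.
move=> extQ.
have [step stepP] : exists step : nat -> nat,
    forall n, n0 <= n -> n < step n /\ Q n (step n).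
  apply: (ClassicalEpsilon.choice (fun n m => n0 <= n -> n < m /\ Q n m)) => n.
  case: (leqP n0 n) => [/extQ[m nm Qnm] | _]; first by exists m.
  by exists n.
pose t k := iter k step n0.
have t_ge k : n0 <= t k.
  by elim: k => //= k IHk; apply: leq_trans IHk (ltnW (proj1 (stepP _ IHk))).
exists t; split; last by move=> k; exact: (proj2 (stepP _ (t_ge k))).
by apply: homo_ltn => [y x z|k]; [exact: ltn_trans | exact: (proj1 (stepP _ (t_ge k)))].
Qed.

Section AlmostFull.
Variable X : Type.

Lemma almost_full_sub (r r' : rel X) : subrel r r' -> almost_full r -> almost_full r'.
Proof. by move=> rr' afr s; have [i [j [ij /rr']]] := afr s; exists i, j. Qed.

Lemma almost_full_relpre (Y : Type) (f : X -> Y) (r : rel Y) :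
  almost_full r -> almost_full (relpre f r).
Proof. by move=> afr s; apply: afr (f \o s). Qed.

Lemma almost_full_extendable (r : rel X) (s : nat -> X) :
  almost_full r -> exists n0, forall n, n0 <= n -> exists2 m, n < m & r (s n) (s m).
Proof.
move=> afr; apply: NNPP => no_n0.
have terminal n : exists2 m, n < m & forall k, m < k -> ~ r (s m) (s k).
  apply: NNPP => none; apply: no_n0; exists n.+1 => m nm.
  apply: NNPP => no_k; apply: none; exists m => // k mk rmk.
  by apply: no_k; exists k.
have [t [t_mono t_term]] :=
  @increasing_chain (fun _ m => forall k, m < k -> ~ r (s m) (s k)) 0 (fun n _ => terminal n).
have [i [j [ij rij]]] := afr (fun k => s (t k.+1)).
exact: t_term i (t j.+1) (t_mono i.+1 j.+1 ij) rij.
Qed.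

Lemma almost_full_chain (r : rel X) (s : nat -> X) :
  transitive r -> almost_full r ->
  exists phi : nat -> nat, {homo phi : i j / i < j} /\
    forall i j, i < j -> r (s (phi i)) (s (phi j)).
Proof.
move=> r_tr afr; have [n0 ext] := almost_full_extendable s afr.
have [phi [phi_mono phi_r]] := @increasing_chain (fun n m => r (s n) (s m)) n0 ext.
by exists phi; split => //; exact: (homo_ltn (f := s \o phi) (r := r)).
Qed.

Lemma almost_full_forall (I : finType) (R : I -> rel X) :
  (forall k, transitive (R k)) -> (forall k, almost_full (R k)) ->
  almost_full [rel x y | [forall k, R k x y]].
Proof.
move=> R_tr afR s.
suff [phi [phi_mono phi_R]] : exists phi : nat -> nat, {homo phi : i j / i < j} /\
    forall i j, i < j -> forall k, k \in enum I -> R k (s (phi i)) (s (phi j)).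
  exists (phi 0), (phi 1); split; first exact: phi_mono.
  by apply/forallP => k; apply: phi_R => //; rewrite mem_enum inE.
elim: (enum I) => [|k l [phi [phi_mono phi_R]]]; first by exists id; split.
have [psi [psi_mono psi_R]] := almost_full_chain (s \o phi) (R_tr k) (afR k).
exists (phi \o psi); split => [i j ij|i j ij k']; first exact/phi_mono/psi_mono.
by rewrite inE => /predU1P [-> | k'l]; [exact: psi_R | exact/phi_R/k'l/psi_mono].
Qed.

End AlmostFull.

Lemma almost_full_leq : almost_full leq.
Proof.
move=> s; suff : forall n i, s i = n -> exists i j, i < j /\ s i <= s j.
  by move/(_ _ 0 erefl).
elim/ltn_ind => n IHn i sin.
case: (leqP (s i) (s i.+1)) => [|lt_s]; first by exists i, i.+1.
by apply: (IHn _ _ i.+1 erefl); rewrite -sin.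
Qed.

Lemma almost_full_eq (T : finType) : almost_full (@eq_op T).
Proof.
move=> s; pose f (i : 'I_#|T|.+1) := s i.
have /injectivePn [i [j ij fij]] : ~~ injectiveb f.
  by apply/injectiveP => /leq_card; rewrite card_ord ltnn.
case: (ltngtP i j) => [lt_ij | lt_ji | /val_inj eq_ij]; last by rewrite eq_ij eqxx in ij.
- by exists i, j; rewrite lt_ij [s i]fij.
- by exists j, i; rewrite lt_ji [s i]fij.
Qed.

Lemma strong_hom_le_hom_le (A B : digraph) : strong_hom_le A B -> hom_le A B.
Proof. by move=> [f [[f_hom _] f_surj]]; exists f. Qed.

Definition edges (D : digraph) : {set vert D * vert D} := [set p | dedge p.1 p.2].

Lemma card_edges (D : digraph) : #|edges D| <= dsize D * dsize D.
Proof. by apply: leq_trans (max_card _) _; rewrite card_prod card_ord. Qed.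

Section Epimorphism.
Variables (A B : digraph) (f : vert B -> vert A).
Hypotheses (f_hom : is_hom f) (f_surj : surj f).

Let f2 (p : vert B * vert B) := (f p.1, f p.2).

Lemma surj_right_inverse : exists2 g : vert A -> vert B, cancel g f & injective g.
Proof.
have [g gK] := fin_all_exists f_surj.
by exists g => // a b gab; rewrite -(gK a) -(gK b) gab.
Qed.

Lemma epi_dsize : dsize A <= dsize B.
Proof.
have [g _ g_inj] := surj_right_inverse.
by have := leq_card g g_inj; rewrite !card_ord.
Qed.

Lemma image_edges_sub : f2 @: edges B \subset edges A.
Proof. by apply/subsetP => q /imsetP [p]; rewrite inE => /f_hom fp ->; rewrite inE. Qed.

Hypothesis eq_dsize : dsize A = dsize B.

Lemma epi_bijective : bijective f.
Proof.
have [g gK g_inj] := surj_right_inverse.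
have g_onto b : b \in codom g by apply: inj_card_onto; rewrite ?card_ord ?eq_dsize.
by exists g => // b; have /codomP [a ->] := g_onto b; rewrite gK.
Qed.

Lemma card_image_edges : #|f2 @: edges B| = #|edges B|.
Proof.
have [g fK _] := epi_bijective.
by apply: card_imset => -[x y] [x' y'] [/(can_inj fK) -> /(can_inj fK) ->].
Qed.

Lemma epi_card_edges : #|edges B| <= #|edges A|.
Proof. by rewrite -card_image_edges subset_leq_card ?image_edges_sub. Qed.

Lemma epi_inverse_strong : #|edges A| <= #|edges B| -> strong_hom_le B A.
Proof.
move=> le_edges; have [g fK gK] := epi_bijective.
have image_edges : f2 @: edges B = edges A.
  by apply/eqP; rewrite eqEcard image_edges_sub card_image_edges.
exists g; split=> [|b]; last by exists (f b).
split=> [a a' | b b'] e; last by exists b, b'; split; rewrite // -[b]gK -[b']gK f_hom.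
have : (a, a') \in edges A by rewrite inE.
by rewrite -image_edges => /imsetP [[x y]]; rewrite inE /= => exy [-> ->]; rewrite !fK.
Qed.

End Epimorphism.

Lemma lex_rank_lt (a b eA eB : nat) :
  a < b \/ a = b /\ eB < eA -> eA <= a * a -> eB <= b * b ->
  (a * a).+1 * a + (a * a - eA) < (b * b).+1 * b + (b * b - eB).
Proof.
move=> [lt_ab | [-> lt_e]] le_eA le_eB; first last.
  by rewrite ltn_add2l ltn_sub2lE.
apply: (@leq_trans ((a * a).+1 * a.+1)).
  by rewrite mulnS [X in _ < X]addnC ltn_add2l ltnS leq_subr.
apply: leq_trans (leq_addr _ _) => /=.
by rewrite leq_mul // ltnS leq_mul // ltnW.
Qed.

(* (#vertices, -#edges) in lexicographic order, packed into one number. *)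
Definition epi_rank (D : digraph) : nat :=
  (dsize D * dsize D).+1 * dsize D + (dsize D * dsize D - #|edges D|).

Lemma epi_rank_lt (A B : digraph) :
  hom_le A B -> ~ strong_hom_le B A -> epi_rank A < epi_rank B.
Proof.
move=> [f [f_hom f_surj]] not_strong.
apply: lex_rank_lt (card_edges A) (card_edges B).
have := epi_dsize f_surj; rewrite leq_eqVlt => /predU1P [eq_AB | lt_AB]; last by left.
case: (leqP #|edges A| #|edges B|) => [/(epi_inverse_strong f_hom f_surj eq_AB) //|].
by right.
Qed.

Lemma no_descending_nat (m : nat -> nat) : ~ (forall i, m i.+1 < m i).
Proof.
move=> m_dec; have bound i : m i + i <= m 0.
  elim: i => [|i IHi]; first by rewrite addn0.
  by rewrite addnS; apply: leq_trans IHi; rewrite ltn_add2r.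
by have := bound (m 0).+1; rewrite addnS ltnNge leq_addl.
Qed.

Lemma no_descending_chain (P : digraph -> Prop) (le : digraph -> digraph -> Prop) :
  (forall A B, le A B -> hom_le A B) -> (forall A B, strong_hom_le A B -> le A B) ->
  ~ exists s : nat -> digraph, (forall i, P (s i)) /\
      forall i, le (s i.+1) (s i) /\ ~ le (s i) (s i.+1).
Proof.
move=> le_hom strong_le [s [_ s_desc]]; apply: (@no_descending_nat (epi_rank \o s)) => i.
have [le_next not_le] := s_desc i.
by apply: epi_rank_lt (le_hom _ _ le_next) _ => /strong_le.
Qed.

Lemma colour_surjection (A B : finType) (C : eqType) (colA : A -> C) (colB : B -> C) :
  (forall c, #|[pred y | colA y == c]| <= #|[pred x | colB x == c]|) ->
  (forall x, exists y, colA y = colB x) ->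
  exists f : B -> A, (forall x, colA (f x) = colB x) /\ surj f.
Proof.
move=> le_count has_colour; have [y0 y0_col] := fin_all_exists has_colour.
(* The k-th element of a colour class of B goes to the k-th element of the same
   class of A, or to the default [y0 x] of that colour once A runs out. *)
pose clsA c := enum [pred y | colA y == c]; pose clsB c := enum [pred x | colB x == c].
pose f x := nth (y0 x) (clsA (colB x)) (index x (clsB (colB x))).
exists f; split => [x | y].
  rewrite /f; case: (ltnP (index x (clsB (colB x))) (size (clsA (colB x)))) => [lt_i|ge_i].
    by have := mem_nth (y0 x) lt_i; rewrite mem_enum inE => /eqP.
  by rewrite nth_default.
set c := colA y; set i := index y (clsA c).
have yA : y \in clsA c by rewrite mem_enum inE.
have lt_i : i < size (clsB c).
  by rewrite -cardE; apply: leq_trans (le_count c); rewrite cardE index_mem.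
have [x0 _] : exists x0 : B, true by case: (clsB c) lt_i => // x0; exists x0.
have xB : nth x0 (clsB c) i \in clsB c by exact: mem_nth.
have colx : colB (nth x0 (clsB c) i) = c by move: xB; rewrite mem_enum inE => /eqP.
exists (nth x0 (clsB c) i); rewrite /f colx index_uniq ?enum_uniq //.
exact: nth_index.
Qed.

Definition coloured_by (C : finType) (R : rel C) (L : pred C) (D : digraph)
    (col : vert D -> C) : Prop :=
  [/\ forall x y, x != y -> dedge x y = R (col x) (col y),
      forall x, dedge x x = L (col x) &
      (* merging two vertices of one colour turns an edge between them into a loop *)
      forall x y, x != y -> col x = col y -> R (col x) (col x) -> L (col x)].

Section ColouredDigraphs.
Variables (C : finType) (R : rel C) (L : pred C) (D D' : digraph).
Variables (col : vert D -> C) (col' : vert D' -> C).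
Hypotheses (col_ok : coloured_by R L col) (col'_ok : coloured_by R L col').

Lemma colour_preserving_strong_hom (f : vert D' -> vert D) :
  (forall x, col (f x) = col' x) -> is_strong_hom f.
Proof.
move: col_ok col'_ok => [edgeD loopD mergeD] [edgeD' loopD' mergeD'] f_col.
split=> [a b ab | a b fab].
  case: (eqVneq a b) ab => [<- | ne_ab] ab; first by rewrite loopD f_col -loopD'.
  case: (eqVneq (f a) (f b)) => [eq_f | ne_f]; last by rewrite edgeD // !f_col -edgeD'.
  have eq_col : col' a = col' b by rewrite -!f_col eq_f.
  rewrite -eq_f loopD f_col; apply: (mergeD' a b ne_ab eq_col).
  by rewrite {2}eq_col -edgeD'.
case: (eqVneq (f a) (f b)) => [eq_f | ne_f].
  by exists a, a; split; rewrite // loopD' -f_col -loopD {2}eq_f.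
have ne_ab : a != b by apply: contra_neq ne_f => ->.
by exists a, b; split; rewrite // edgeD' // -!f_col -edgeD.
Qed.

Lemma coloured_strong_hom_le :
  (forall c, #|[pred x | col x == c]| <= #|[pred x | col' x == c]|) ->
  (forall x', exists x, col x = col' x') ->
  strong_hom_le D D'.
Proof.
move=> le_count has_colour; have [f [f_col f_surj]] := colour_surjection le_count has_colour.
by exists f; split; first exact: colour_preserving_strong_hom.
Qed.

End ColouredDigraphs.

(* A colour is (part, loop, edge to D_c, edge from D_c, out- and in-neighbours
   in D_f), where the part is [inl i] for the i-th vertex of D_f, [inr true] for
   D_e and [inr false] for D_c. *)
Definition palette (N : nat) : finType :=
  (('I_N.+1 + bool) * bool * bool * bool * {ffun 'I_N.+1 -> bool} *
   {ffun 'I_N.+1 -> bool})%type.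

Definition palette_edge (N : nat) (c1 c2 : palette N) : bool :=
  let: (p1, _, to1, _, out1, _) := c1 in
  let: (p2, _, _, from2, _, in2) := c2 in
  match p2, p1 with
  | inl j, _ => out1 j
  | inr _, inl i => in2 i
  | inr e2, inr e1 =>
      match e1, e2 with
      | true, true => false
      | true, false => to1
      | false, true => from2
      | false, false => true
      end
  end.

Definition palette_loop (N : nat) (c : palette N) : bool :=
  let: (_, loop, _, _, _, _) := c in loop.

(* Loops are part of the colour. *)
Section TNColouring.
Variables (N : nat) (D : digraph) (De Dc Df : {set vert D}).
Hypotheses (cover : De :|: Dc :|: Df = setT)
  (De_empty : forall x y, x \in De -> y \in De -> x != y -> ~~ dedge x y)
  (Dc_complete : forall x y, x \in Dc -> y \in Dc -> dedge x y)
  (card_Df : #|Df| <= N)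
  (uniform : forall x y z t, x \in De -> y \in De -> z \in Dc -> t \in Dc ->
     dedge x z = dedge y t /\ dedge z x = dedge t y).

Definition Df_index (v : vert D) : 'I_N.+1 := inord (index v (enum Df)).

Lemma Df_index_inj : {in Df &, injective Df_index}.
Proof.
have index_lt v : v \in Df -> index v (enum Df) < N.+1.
  move=> vDf; rewrite ltnS (leq_trans _ card_Df) // ltnW // cardE.
  by rewrite index_mem mem_enum.
move=> v w vDf wDf /(congr1 val); rewrite /= !inordK ?index_lt // => eq_index.
by rewrite -[v](@nth_index _ v v (enum Df)) ?mem_enum // eq_index nth_index ?mem_enum.
Qed.

Definition part (v : vert D) : 'I_N.+1 + bool :=
  if v \in De then inr true else if v \in Dc then inr false else inl (Df_index v).

Lemma part_inl v i : part v = inl i -> v \in Df /\ Df_index v = i.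
Proof.
have : v \in De :|: Dc :|: Df by rewrite cover inE.
by rewrite /part !inE; case: (v \in De); case: (v \in Dc) => //= vDf [].
Qed.

Lemma part_inr v (e : bool) : part v = inr e -> if e then v \in De else v \in Dc.
Proof. by rewrite /part; case: (v \in De); case: (v \in Dc) => // -[<-]. Qed.

Definition TN_colour (v : vert D) : palette N :=
  (part v, dedge v v, [exists z in Dc, dedge v z], [exists z in Dc, dedge z v],
   [ffun k => [exists w in Df, (Df_index w == k) && dedge v w]],
   [ffun k => [exists w in Df, (Df_index w == k) && dedge w v]]).

Lemma Df_pattern_out x y : y \in Df ->
  [exists w in Df, (Df_index w == Df_index y) && dedge x w] = dedge x y.
Proof.
move=> yDf; apply/existsP/idP => [[w /and3P [wDf /eqP eq_index xw]] | xy].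
  by rewrite -(Df_index_inj wDf yDf eq_index).
by exists y; rewrite yDf eqxx xy.
Qed.

Lemma Df_pattern_in x y : x \in Df ->
  [exists w in Df, (Df_index w == Df_index x) && dedge w y] = dedge x y.
Proof.
move=> xDf; apply/existsP/idP => [[w /and3P [wDf /eqP eq_index wy]] | xy].
  by rewrite -(Df_index_inj wDf xDf eq_index).
by exists x; rewrite xDf eqxx xy.
Qed.

Lemma TN_colour_edge x y :
  x != y -> dedge x y = palette_edge (TN_colour x) (TN_colour y).
Proof.
move=> ne_xy; rewrite /palette_edge /=.
case Py: (part y) => [j | e2].
  by have [yDf <-] := part_inl Py; rewrite ffunE Df_pattern_out.
case Px: (part x) => [i | e1].
  by have [xDf <-] := part_inl Px; rewrite ffunE Df_pattern_in.
move: (part_inr Px) (part_inr Py) => {Px Py}.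
case: e1; case: e2 => xP yP; first exact/negbTE/De_empty.
- apply/idP/existsP => [xy | [z /andP [zDc xz]]]; first by exists y; rewrite yP.
  by have [<- _] := uniform xP xP zDc yP.
- apply/idP/existsP => [xy | [z /andP [zDc zy]]]; first by exists x; rewrite xP.
  by have [_ <-] := uniform yP yP zDc xP.
- exact: Dc_complete.
Qed.

Lemma TN_colour_merge x y : x != y -> TN_colour x = TN_colour y ->
  palette_edge (TN_colour x) (TN_colour x) -> palette_loop (TN_colour x).
Proof.
move=> ne_xy [eq_part _ _ _ _ _]; rewrite /palette_edge /=.
case Px: (part x) => [i | [|]] //.
  have [xDf ix] := part_inl Px; have [yDf iy] := part_inl (etrans (esym eq_part) Px).
  by rewrite (Df_index_inj xDf yDf (etrans ix (esym iy))) eqxx in ne_xy.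
by move=> _; apply: Dc_complete; have := part_inr Px.
Qed.

Lemma TN_colour_coloured : coloured_by (@palette_edge N) (@palette_loop N) TN_colour.
Proof. by split => [x y|x|]; [exact: TN_colour_edge | | exact: TN_colour_merge]. Qed.

End TNColouring.

Lemma in_TN_coloured N D : in_TN N D ->
  exists col : vert D -> palette N, coloured_by (@palette_edge N) (@palette_loop N) col.
Proof.
move=> [De [Dc [Df [_ _ _ cover [[De_empty _] Dc_complete card_Df uniform]]]]].
by exists (@TN_colour N D De Dc Df); apply: TN_colour_coloured.
Qed.

Definition leq_supp (m n : nat) : bool := (m <= n) && ((m == 0) == (n == 0)).

Lemma leq_supp_trans : transitive leq_supp.
Proof.
move=> y x z /andP [le_xy /eqP eq_xy] /andP [le_yz /eqP eq_yz].
by rewrite /leq_supp (leq_trans le_xy le_yz) eq_xy eq_yz eqxx.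
Qed.

Lemma almost_full_leq_supp : almost_full leq_supp.
Proof.
pose R (b : bool) : rel nat := if b then leq else relpre (eqn^~ 0) eq_op.
apply: (@almost_full_sub _ [rel m n | [forall b, R b m n]]).
  by move=> m n /forallP R_mn; apply/andP; split; [exact: R_mn true | exact: R_mn false].
apply: almost_full_forall => [[] y x z|[]]; rewrite /R /=.
- exact: leq_trans.
- by move=> /eqP -> /eqP ->.
- exact: almost_full_leq.
- exact/almost_full_relpre/almost_full_eq.
Qed.

Lemma no_strong_antichain (N : nat) :
  ~ exists s : nat -> digraph, (forall i, in_TN N (s i)) /\
      forall i j, i <> j -> ~ strong_hom_le (s i) (s j).
Proof.
move=> [s [s_TN s_anti]].
have col i : {col : vert (s i) -> palette N | coloured_by (@palette_edge N) (@palette_loop N) col}.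
  exact/constructive_indefinite_description/in_TN_coloured.
pose count i c := #|[pred x | sval (col i) x == c]|.
have afR : almost_full [rel u v : palette N -> nat | [forall c, leq_supp (u c) (v c)]].
  apply: almost_full_forall (fun c => relpre (fun u => u c) leq_supp) _ _ => c.
    by move=> y x z; apply: leq_supp_trans.
  exact: almost_full_relpre almost_full_leq_supp.
have [i [j [lt_ij /forallP le_count]]] := afR count.
have ne_ij : i <> j by move=> eq_ij; rewrite eq_ij ltnn in lt_ij.
apply: (s_anti i j ne_ij); apply: coloured_strong_hom_le (svalP (col i)) (svalP (col j)) _ _.
  by move=> c; have /andP [] := le_count c.
move=> x'; have /andP [_ /eqP supp] := le_count (sval (col j) x').
have : 0 < count i (sval (col j) x').
  by rewrite lt0n supp -lt0n; apply/card_gt0P; exists x'; rewrite inE.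
by case/card_gt0P => x; rewrite inE => /eqP; exists x.
Qed.

Theorem theorem2p6 (N : nat) :
  wqo (in_TN N) hom_le /\ wqo (in_TN N) strong_hom_le.
Proof.
have strong_hom := strong_hom_le_hom_le.
split; split.
- exact: no_descending_chain.
- move=> [s [s_TN s_anti]]; apply: (@no_strong_antichain N).
  by exists s; split => // i j ne_ij /strong_hom; apply: s_anti.
- exact: no_descending_chain.
- exact: no_strong_antichain.
Qed.
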